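(* There exists a universal constant $c_4>0$ such that the following holds. Fix $s>0$ and $\delta\in(0,\delta_0)$. For every integer $n\ge1$, every partition $\lambda=1^{n_1}2^{n_2}\cdots$ of $n$, and every integer $a$ with $a\ge\delta n^{5/4}\ge e^{c_1}n$, \[ e^{-c_4n^2/a^2}\le\prod_{i\ge2}\mathsf K_{a,i}\le e^{c_4n^2/a^2}. \]
   Context: For integers $a,i\ge1$ let $f_{a,i}=\frac1{2i}\sum_{d\mid i,\ d\text{ odd}}\mu(d)(2a)^{i/d}$ ($\mu$ the Möbius function; sum over positive odd divisors of $i$), a positive integer, and define $g_{a,i}$ by $f_{a,i}=\frac{(2a)^i}{2i}g_{a,i}$. Let $c_1>0$ be a fixed constant such that $e^{-c_1(2a)^{-2i/3}}\le g_{a,i}\le e^{c_1(2a)^{-2i/3}}$ for all $a,i\ge1$ (e.g. $c_1=4$). For $s>0$ and $n\ge1$ let $t_n\in(0,1)$ be the unique solution in $(0,1)$ of $\frac{4t}{(1+t)^2}=e^{-s/\sqrt n}$, and $\delta_0=\left[\sup_{n\ge1}\left(n^{1/4}\log(1/t_n)e^{(c_1/4)+1}\right)\right]^{-1}$. Given a partition $\lambda$ of $n$ with $n_i$ parts of size $i$, let \[ \mathsf K_{a,i}=\sum_{\nu=0}^{n_i}\frac1{2^{n_i}}\binom{n_i}{\nu}\frac{(f_{a,i}-\nu+n_i-1)!}{(f_{a,i}-\nu)!\,f_{a,i}^{\,n_i-1}}, \] equivalently $\mathsf K_{a,i}=\frac{n_i!}{(2f_{a,i})^{n_i}}[x^{n_i}]\left(\frac{1+x}{1-x}\right)^{f_{a,i}}$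 (the ratio of factorials means $\prod_{k=1}^{n_i-1}(f_{a,i}-\nu+k)$ when $n_i\ge1$, and $\mathsf K_{a,i}=1$ when $n_i=0$). The product $\prod_{i\ge2}$ runs over $2\le i\le n$. *)

From HB Require Import structures.
From mathcomp Require Import all_boot all_order all_algebra.
From mathcomp Require Import all_classical all_reals all_analysis.
Set Implicit Arguments. Unset Strict Implicit. Unset Printing Implicit Defensive.
Import Order.TTheory GRing.Theory Num.Theory.
Local Open Scope ring_scope.
Local Open Scope classical_set_scope.

(* Moebius function on positive integers (value at 0 is irrelevant: 0). *)
Definition moebius (n : nat) : int :=
  if n == 0%N then 0
  else if all (fun p => logn p n == 1%N) (primes n)
       then (-1) ^+ size (primes n) else 0.

Section Defs.
Variable R : realType.

Definition fai (a i : nat) : R :=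
  (2 * i%:R)^-1 *
  \sum_(1 <= d < i.+1 | ((d %| i)%N && odd d))
      (moebius d)%:~R * (2 * a%:R) ^+ (i %/ d)%N.

(* g_{a,i} defined by f_{a,i} = (2a)^i / (2i) * g_{a,i} *)
Definition gai (a i : nat) : R := fai a i * (2 * i%:R) / (2 * a%:R) ^+ i.

(* K_{a,i} for a given multiplicity ni = n_i; the ratio of factorials
   (f-nu+ni-1)!/((f-nu)! f^(ni-1)) is the product prod_{k=1}^{ni-1} (f-nu+k)/f *)
Definition Kai (a i ni : nat) : R :=
  \sum_(0 <= nu < ni.+1)
     (2 ^+ ni)^-1 * 'C(ni, nu)%:R *
     \prod_(1 <= k < ni) ((fai a i - nu%:R + k%:R) / fai a i).

Definition tn (s : R) (n : nat) : R :=
  xget 0 [set t : R | 0 < t < 1 /\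
            4 * t / (1 + t) ^+ 2 = expR (- s / Num.sqrt n%:R)].

Definition delta0 (c1 s : R) : R :=
  (sup [set x : R | exists2 n : nat, (1 <= n)%N &
          x = n%:R `^ (4^-1) * ln ((tn s n)^-1) * expR (c1 / 4 + 1)])^-1.

End Defs.

Definition is_partition (n : nat) (lam : seq nat) : Prop :=
  all (fun x => 0 < x)%N lam /\ sorted geq lam /\ sumn lam = n.

From HB Require Import structures.
From mathcomp Require Import all_boot all_order all_algebra.
From mathcomp Require Import all_classical all_reals all_analysis.
From mathcomp Require Import ring lra zify.
Import Order.TTheory GRing.Theory Num.Theory.

Set Implicit Arguments.
Unset Strict Implicit.
Unset Printing Implicit Defensive.

(* For i >= 2 the bounds g_{a,i} >= e^{-c1} and (2a)^i / (2i) >= a^2 give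
   f_{a,i} >= F := a^2 e^{-c1}, and a >= e^{c1} n forces 2n <= F.  With m = n_i,
   each factor (f - nu + k) / f of K_{a,i} is 1 + x with |x| <= m / f <= 1/2, hence
   lies in [e^{-2m/f}, e^{2m/f}]; the m - 1 factors of a product stay within
   e^{+-2m^2/f}, and so does K_{a,i}, a binomial average of such products.  As
   m <= n and f >= F, 2m^2/f <= 2nm/F, and sum_i n_i <= n then yields the
   bound with c4 = 2 e^{c1}. *)

Lemma sq_mul_le_expn_double (a i : nat) : (0 < a)%N -> (2 <= i)%N ->
  (2 * i * a ^ 2 <= (2 * a) ^ i)%N.
Proof.
move=> a_gt0; elim: i => [//|i IHi].
rewrite leq_eqVlt => /orP[/eqP <-|i_ge2]; first by rewrite expnMn leq_mul.
have a2_gt0 : (0 < a ^ 2)%N by rewrite expn_gt0 a_gt0.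
rewrite [(2 * a) ^ _]expnS (leq_trans _ (leq_mul (leqnn (2 * a)) (IHi i_ge2))) //; nia.
Qed.

Lemma sum_count_mem (T : eqType) (r s : seq T) : uniq r ->
  (\sum_(i <- r) count_mem i s)%N = count (mem r) s.
Proof.
move=> r_uniq; elim: s => [|x s IHs] /=; first by rewrite big1.
rewrite big_split /= IHs -count_uniq_mem //; congr (_ + _)%N.
by rewrite -sum1_count [RHS]big_mkcond; apply: eq_bigr => i _; rewrite eq_sym.
Qed.

Lemma size_le_sumn (s : seq nat) : all (fun x => 0 < x)%N s -> (size s <= sumn s)%N.
Proof.
by elim: s => [//|x s IHs] /= /andP[x_gt0 /IHs]; rewrite -add1n; apply: leq_add.
Qed.

Local Open Scope ring_scope.

Section WithinExp.
Variable R : realType.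
Implicit Types (e x : R).

Definition within_expR e x : bool := expR (- e) <= x <= expR e.

Lemma within_expR_gt0 [e x] : within_expR e x -> 0 < x.
Proof. by case/andP=> /(lt_le_trans (expR_gt0 _)). Qed.

Lemma within_expR_le e e' x : e <= e' -> within_expR e x -> within_expR e' x.
Proof.
move=> le_ee' /andP[lo hi]; apply/andP; split.
  by apply: le_trans lo; rewrite ler_expR lerN2.
by apply: le_trans hi _; rewrite ler_expR.
Qed.

Lemma within_expR_prod (I : Type) (r : seq I) (P : pred I) (E F : I -> R) :
  (forall i, P i -> within_expR (E i) (F i)) ->
  within_expR (\sum_(i <- r | P i) E i) (\prod_(i <- r | P i) F i).
Proof.
move=> EF; apply/andP; split.
  rewrite -sumrN expR_sum; apply: ler_prod => i Pi.
  by case/andP: (EF i Pi) => lo _; rewrite expR_ge0.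
rewrite expR_sum; apply: ler_prod => i Pi.
by have /andP[_ ->] := EF i Pi; rewrite (ltW (within_expR_gt0 (EF i Pi))).
Qed.

Lemma within_expR_avg (I : Type) (r : seq I) (P : pred I) (w F : I -> R) e :
  (forall i, P i -> 0 <= w i) -> \sum_(i <- r | P i) w i = 1 ->
  (forall i, P i -> within_expR e (F i)) ->
  within_expR e (\sum_(i <- r | P i) w i * F i).
Proof.
move=> w_ge0 w_sum1 eF.
have avg_const y : y = \sum_(i <- r | P i) w i * y by rewrite -mulr_suml w_sum1 mul1r.
apply/andP; split.
  rewrite [X in X <= _]avg_const; apply: ler_sum => i Pi.
  by rewrite ler_wpM2l ?w_ge0 //; case/andP: (eF i Pi).
rewrite [X in _ <= X]avg_const; apply: ler_sum => i Pi.
by rewrite ler_wpM2l ?w_ge0 //; case/andP: (eF i Pi).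
Qed.

Lemma within_expR_1Dx x : `|x| <= 2^-1 -> within_expR (2 * `|x|) (1 + x).
Proof.
move=> x_small; have x_le := ler_norm x; have t_ge0 := normr_ge0 x.
have Nx_le : - x <= `|x| by rewrite -normrN ler_norm.
apply/andP; split; last first.
  by apply: le_trans (expR_ge1Dx x) _; rewrite ler_expR; lra.
(* (1 + x) expR (2t) >= (1 - t)(1 + 2t) = 1 + t (1 - 2t) >= 1 for t = |x| *)
have := expR_ge1Dx (2 * `|x|); have := expR_gt0 (2 * `|x|).
rewrite expRN -div1r ler_pdivrMr //; nra.
Qed.

End WithinExp.

Section BinomialMean.
Variable R : realType.
Implicit Types (f : R) (m : nat).

Definition Kf f m : R :=
  \sum_(0 <= nu < m.+1)
     (2 ^+ m)^-1 * 'C(m, nu)%:R *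
     \prod_(1 <= k < m) ((f - nu%:R + k%:R) / f).

Lemma KaiE (a i ni : nat) : Kai R a i ni = Kf (fai R a i) ni.
Proof. by []. Qed.

Lemma sum_binomial_weights m : \sum_(0 <= nu < m.+1) (2 ^+ m)^-1 * 'C(m, nu)%:R = 1 :> R.
Proof.
rewrite -mulr_sumr big_mkord.
have -> : \sum_(nu < m.+1) 'C(m, nu)%:R = (1 + 1 : R) ^+ m.
  by rewrite exprDn; apply: eq_bigr => nu _; rewrite !expr1n mul1r.
by rewrite mulVf // expf_neq0.
Qed.

Lemma shifted_ratio_within f m (nu k : nat) : 0 < f -> 2 * m%:R <= f ->
  (nu <= m)%N -> (k <= m)%N ->
  within_expR (2 * m%:R / f) ((f - nu%:R + k%:R) / f).
Proof.
move=> f_gt0 f_ge nu_le k_le.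
have -> : (f - nu%:R + k%:R) / f = 1 + (k%:R - nu%:R) / f by field; rewrite gt_eqF.
have dist_le : `|(k%:R - nu%:R) / f| <= m%:R / f.
  rewrite normrM [`|f^-1|]gtr0_norm ?invr_gt0 // ler_pM2r ?invr_gt0 //.
  move: nu_le k_le; rewrite -!(ler_nat R) => nu_le k_le.
  have := ler0n R k; have := ler0n R nu.
  by rewrite ler_norml => nu_ge0 k_ge0; apply/andP; split; lra.
apply: within_expR_le (within_expR_1Dx _); first by rewrite -mulrA ler_pM2l.
by apply: le_trans dist_le _; rewrite ler_pdivrMr // mulrC -ler_pdivrMr // ?invr_gt0; lra.
Qed.

Lemma Kf_within f m : 0 < f -> 2 * m%:R <= f -> within_expR (2 * m%:R ^+ 2 / f) (Kf f m).
Proof.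
move=> f_gt0 f_ge; rewrite /Kf big_nat_cond.
apply: within_expR_avg => [nu _||nu /andP[/andP[_ nu_lt] _]].
- by rewrite mulr_ge0 // invr_ge0 exprn_ge0.
- by rewrite -big_nat_cond sum_binomial_weights.
rewrite big_nat_cond.
apply: within_expR_le (within_expR_prod _ (E := fun=> 2 * m%:R / f) _) => [|k].
  rewrite -big_nat_cond sumr_const_nat -[_ *+ (m - 1)]mulr_natr.
  rewrite expr2 mulrA mulrAC; apply: ler_wpM2r; first by rewrite invr_ge0 ltW.
  by apply: ler_wpM2l => //; rewrite ler_nat leq_subr.
case/andP=> /andP[_ k_lt] _.
by apply: shifted_ratio_within => //; apply: ltnW.
Qed.

Lemma Kf_within_uniform f (F : R) m (n : nat) : 0 < F -> F <= f ->
  2 * n%:R <= F -> (m <= n)%N -> within_expR (2 * n%:R / F * m%:R) (Kf f m).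
Proof.
move=> F_gt0 F_le n_le m_le; have f_gt0 := lt_le_trans F_gt0 F_le.
have m_leR : m%:R <= n%:R :> R by rewrite ler_nat.
have m_ge0 := ler0n R m.
apply: within_expR_le (Kf_within f_gt0 _); last by lra.
have inv_le : f^-1 <= F^-1 by rewrite lef_pV2 ?posrE.
apply: (@le_trans _ _ (2 * m%:R ^+ 2 / F)); first by rewrite ler_wpM2l.
have -> : 2 * m%:R ^+ 2 / F = 2 * m%:R * m%:R / F by ring.
rewrite [leRHS]mulrAC; apply: ler_wpM2r; first by rewrite invr_ge0 ltW.
by apply: ler_wpM2r => //; lra.
Qed.

End BinomialMean.

Section FaiLowerBound.
Variable R : realType.

Lemma powR_le1 (b y : R) : 1 <= b -> y <= 0 -> b `^ y <= 1.
Proof. by move=> b_ge1 y_le0; rewrite -(powRr0 b) ler_powR. Qed.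

Lemma expRN_le_gai (c : R) (a i : nat) : 0 <= c -> (0 < a)%N ->
  expR (- c * (2 * a%:R) `^ (- (2 * i%:R / 3))) <= gai R a i ->
  expR (- c) <= gai R a i.
Proof.
move=> c_ge0 a_gt0; apply: le_trans; rewrite ler_expR mulNr lerN2.
rewrite -[leRHS]mulr1 ler_wpM2l // powR_le1 // ?oppr_le0 ?divr_ge0 //.
have a_ge1 : 1 <= a%:R :> R by rewrite ler1n.
lra.
Qed.

Lemma faiE (a i : nat) : (0 < a)%N -> (0 < i)%N ->
  fai R a i = gai R a i * ((2 * a%:R) ^+ i / (2 * i%:R)).
Proof.
move=> a_gt0 i_gt0; rewrite /gai; field.
by rewrite !pnatr_eq0 -!lt0n i_gt0 expf_neq0 // mulf_neq0 // pnatr_eq0 -lt0n.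
Qed.

Lemma sq_mul_le_fai (c : R) (a i : nat) : (0 < a)%N -> (2 <= i)%N ->
  expR (- c) <= gai R a i -> a%:R ^+ 2 * expR (- c) <= fai R a i.
Proof.
move=> a_gt0 i_ge2 g_ge; rewrite faiE ?(leq_trans _ i_ge2) // mulrC.
apply: ler_pM => //.
have i_gt0 : (0 : R) < 2 * i%:R by rewrite mulr_gt0 // ltr0n (leq_trans _ i_ge2).
rewrite ler_pdivlMr //; have := sq_mul_le_expn_double a_gt0 i_ge2.
by rewrite -(ler_nat R) !natrM !natrX natrM mulrC expr2.
Qed.

End FaiLowerBound.

Lemma double_le_sq_expRN (R : realType) (c : R) (n a : nat) : 0 < c -> (0 < n)%N ->
  expR c * n%:R <= a%:R -> 2 * n%:R <= a%:R ^+ 2 * expR (- c).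
Proof.
move=> c_gt0 n_gt0 a_ge; have E_gt1 : 1 < expR c by rewrite expR_gt1.
have n_ge1 : 1 <= n%:R :> R by rewrite ler1n.
have a_gt_n : (n < a)%N by rewrite -(ltr_nat R); apply: lt_le_trans a_ge; nra.
have a_ge2 : 2 <= a%:R :> R by rewrite (ler_nat R 2); apply: leq_ltn_trans a_gt_n.
rewrite expRN ler_pdivlMr ?expR_gt0 //; nra.
Qed.

Lemma prod_Kai_within (R : realType) (F : R) (a n : nat) (lam : seq nat) :
  0 < F -> 2 * n%:R <= F -> (forall i, (2 <= i)%N -> F <= fai R a i) ->
  (size lam <= n)%N ->
  within_expR (2 * n%:R ^+ 2 / F) (\prod_(2 <= i < n.+1) Kai R a i (count_mem i lam)).
Proof.
move=> F_gt0 n_le F_le size_le.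
have sum_counts : \sum_(2 <= i < n.+1) (count_mem i lam)%:R <= n%:R :> R.
  rewrite -natr_sum ler_nat sum_count_mem ?iota_uniq //.
  exact: leq_trans (count_size _ _) size_le.
apply: (@within_expR_le _ (\sum_(2 <= i < n.+1) 2 * n%:R / F * (count_mem i lam)%:R)).
  have -> : 2 * n%:R ^+ 2 / F = 2 * n%:R / F * n%:R by ring.
  by rewrite -mulr_sumr ler_wpM2l // divr_ge0 ?(ltW F_gt0) // mulr_ge0.
rewrite [\sum_(_ <= _ < _) _]big_nat_cond [\prod_(_ <= _ < _) _]big_nat_cond.
apply: within_expR_prod => i /andP[/andP[i_ge2 _] _].
rewrite KaiE; apply: Kf_within_uniform F_gt0 (F_le i i_ge2) n_le _.
exact: leq_trans (count_size _ _) size_le.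
Qed.

Theorem lemma3p4 (R : realType) (c1 : R) (hc1 : 0 < c1)
  (hg : forall a i : nat, (1 <= a)%N -> (1 <= i)%N ->
      expR (- c1 * (2 * a%:R) `^ (- (2 * i%:R / 3))) <= gai R a i /\
      gai R a i <= expR (c1 * (2 * a%:R) `^ (- (2 * i%:R / 3)))) :
  exists c4 : R, 0 < c4 /\
  forall (s delta : R), 0 < s -> 0 < delta -> delta < delta0 c1 s ->
  forall (n : nat) (lam : seq nat) (a : nat), (1 <= n)%N ->
    is_partition n lam ->
    delta * n%:R `^ (5 / 4) <= a%:R ->
    expR c1 * n%:R <= delta * n%:R `^ (5 / 4) ->
    expR (- c4 * n%:R ^+ 2 / a%:R ^+ 2)
      <= \prod_(2 <= i < n.+1) Kai R a i (count_mem i lam) /\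
    \prod_(2 <= i < n.+1) Kai R a i (count_mem i lam)
      <= expR (c4 * n%:R ^+ 2 / a%:R ^+ 2).
Proof.
exists (2 * expR c1); split; first by rewrite mulr_gt0 ?expR_gt0.
move=> _ delta _ _ _ n lam a n_gt0 [lam_pos [_ lam_sum]] a_ge n_le.
have a_ge_En := le_trans n_le a_ge.
have a_gt0 : (0 < a)%N.
  by rewrite -(ltr_nat R); apply: lt_le_trans a_ge_En; rewrite mulr_gt0 ?expR_gt0 ?ltr0n.
set F := a%:R ^+ 2 * expR (- c1).
have F_le_fai i : (2 <= i)%N -> F <= fai R a i.
  move=> i_ge2; have g_ge := (hg a i a_gt0 (ltnW i_ge2)).1.
  exact: sq_mul_le_fai a_gt0 i_ge2 (expRN_le_gai (ltW hc1) a_gt0 g_ge).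
have F_gt0 : 0 < F by rewrite mulr_gt0 ?expR_gt0 ?exprn_gt0 ?ltr0n.
have size_le : (size lam <= n)%N by rewrite -lam_sum size_le_sumn.
have /andP[lo hi] := prod_Kai_within F_gt0
  (double_le_sq_expRN hc1 n_gt0 a_ge_En) F_le_fai size_le.
have F_eq : 2 * n%:R ^+ 2 / F = 2 * expR c1 * n%:R ^+ 2 / a%:R ^+ 2.
  by rewrite /F expRN; field; rewrite pnatr_eq0 -lt0n a_gt0 gt_eqF ?expR_gt0.
by rewrite !mulNr -F_eq.
Qed.
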